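(* Let $G$ be a finite group, $(C_1,C_2,C_3,C_4)$ a class vector of $G$ and $\rho_4$ the permutation representation of the pure braid group $B_4$ on $\Sigma^i(C_1,C_2,C_3,C_4)$. If $\rho_4(\beta_{12})$, $\rho_4(\beta_{13})$ and $\rho_4(\beta_{14})$ are involutions, then $\rho_4(B_4)\cong C_2\times C_2$.
   Context: A class vector is a tuple of non-trivial conjugacy classes. $\Sigma^i(C_1,\dots,C_4)$ is the set of $G$-conjugacy classes $[\sigma_1,\dots,\sigma_4]$ (simultaneous conjugation) of tuples with $\sigma_j\in C_j$, $\langle\sigma_1,\dots,\sigma_4\rangle=G$, $\sigma_1\sigma_2\sigma_3\sigma_4=\iota$ ($\iota$ the identity). The Hurwitz braid group $H_4=\langle\beta_2,\beta_3,\beta_4\rangle$ acts from the right by $[\underline{\sigma}]^{\beta_2}=[\sigma_1\sigma_2\sigma_1^{-1},\sigma_1,\sigma_3,\sigma_4]$, $[\underline{\sigma}]^{\beta_3}=[\sigma_1,\sigma_2\sigma_3\sigma_2^{-1},\sigma_2,\sigma_4]$, $[\underline{\sigma}]^{\beta_4}=[\sigma_1,\sigma_2,\sigma_3\sigma_4\sigma_3^{-1},\sigma_3]$. The pure braid group $B_4$ is generated by $\beta_{12}=\beta_2^2$, $\beta_{13}=\beta_2^{-1}\beta_3^2\beta_2$, $\beta_{14}=\beta_2^{-1}\beta_3^{-1}\beta_4^2\beta_3\beta_2$, $\beta_{23}=\beta_3^2$, $\beta_{24}=\beta_3^{-1}\beta_4^2\beta_3$, $\beta_{34}=\beta_4^2$,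 and preserves $\Sigma^i(C_1,\dots,C_4)$. An involution is an element of order $2$. *)

From HB Require Import structures.
From mathcomp Require Import all_boot all_fingroup.
Set Implicit Arguments. Unset Strict Implicit. Unset Printing Implicit Defensive.
Local Open Scope group_scope.

Section Braid4.
Variable gT : finGroupType.

Definition tup4 := (gT * gT * gT * gT)%type.

Definition conjt (t : tup4) (g : gT) : tup4 :=
  let: (a, b, c, d) := t in (a ^ g, b ^ g, c ^ g, d ^ g).

(* the Hurwitz generators beta_2, beta_3, beta_4 and their inverses, on tuples *)
Definition hb2 (t : tup4) : tup4 := let: (a, b, c, d) := t in (a * b * a^-1, a, c, d).
Definition hb3 (t : tup4) : tup4 := let: (a, b, c, d) := t in (a, b * c * b^-1, b, d).
Definition hb4 (t : tup4) : tup4 := let: (a, b, c, d) := t in (a, b, c * d * c^-1, c).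
Definition hb2i (t : tup4) : tup4 := let: (a, b, c, d) := t in (b, b^-1 * a * b, c, d).
Definition hb3i (t : tup4) : tup4 := let: (a, b, c, d) := t in (a, c, c^-1 * b * c, d).
Definition hb4i (t : tup4) : tup4 := let: (a, b, c, d) := t in (a, b, d, d^-1 * c * d).

Lemma hb2K : cancel hb2 hb2i.
Proof. by case=> [[[a b] c] d] /=; rewrite !mulgA ?mulVg ?mulgV ?mul1g ?mulgK ?mulgKV. Qed.
Lemma hb3K : cancel hb3 hb3i.
Proof. by case=> [[[a b] c] d] /=; rewrite !mulgA ?mulVg ?mulgV ?mul1g ?mulgK ?mulgKV. Qed.
Lemma hb4K : cancel hb4 hb4i.
Proof. by case=> [[[a b] c] d] /=; rewrite !mulgA ?mulVg ?mulgV ?mul1g ?mulgK ?mulgKV. Qed.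
Lemma hb2iK : cancel hb2i hb2.
Proof. by case=> [[[a b] c] d] /=; rewrite !mulgA ?mulVg ?mulgV ?mul1g ?mulgK ?mulgKV. Qed.
Lemma hb3iK : cancel hb3i hb3.
Proof. by case=> [[[a b] c] d] /=; rewrite !mulgA ?mulVg ?mulgV ?mul1g ?mulgK ?mulgKV. Qed.
Lemma hb4iK : cancel hb4i hb4.
Proof. by case=> [[[a b] c] d] /=; rewrite !mulgA ?mulVg ?mulgV ?mul1g ?mulgK ?mulgKV. Qed.

(* Right action: [s]^(w1 w2 ... wk) = wk (... (w1 s)), so a word acts as the
   composition wk \o ... \o w1. *)
Definition pb12 := hb2 \o hb2.
Definition pb13 := hb2 \o hb3 \o hb3 \o hb2i.                   (* beta_2^-1 beta_3^2 beta_2 *)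
Definition pb14 := hb2 \o hb3 \o hb4 \o hb4 \o hb3i \o hb2i.    (* beta_2^-1 beta_3^-1 beta_4^2 beta_3 beta_2 *)
Definition pb23 := hb3 \o hb3.
Definition pb24 := hb3 \o hb4 \o hb4 \o hb3i.                   (* beta_3^-1 beta_4^2 beta_3 *)
Definition pb34 := hb4 \o hb4.

Lemma pb12_inj : injective pb12.
Proof. by do !apply: inj_comp; apply: can_inj hb2K. Qed.
Lemma pb13_inj : injective pb13.
Proof.
by do !apply: inj_comp; first [apply: can_inj hb2K | apply: can_inj hb3K
  | apply: can_inj hb4K | apply: can_inj hb2iK | apply: can_inj hb3iK | apply: can_inj hb4iK].
Qed.
Lemma pb14_inj : injective pb14.
Proof.
by do !apply: inj_comp; first [apply: can_inj hb2K | apply: can_inj hb3K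
  | apply: can_inj hb4K | apply: can_inj hb2iK | apply: can_inj hb3iK | apply: can_inj hb4iK].
Qed.
Lemma pb23_inj : injective pb23.
Proof. by do !apply: inj_comp; apply: can_inj hb3K. Qed.
Lemma pb24_inj : injective pb24.
Proof.
by do !apply: inj_comp; first [apply: can_inj hb2K | apply: can_inj hb3K
  | apply: can_inj hb4K | apply: can_inj hb2iK | apply: can_inj hb3iK | apply: can_inj hb4iK].
Qed.
Lemma pb34_inj : injective pb34.
Proof. by do !apply: inj_comp; apply: can_inj hb4K. Qed.

(* The permutation of subsets of tuples induced by a pure braid
   (X |-> image of X); on G-conjugacy classes of tuples this is the braid action. *)
Definition setperm (f : tup4 -> tup4) (finj : injective f) : {perm {set tup4}} :=
  perm (imset_inj finj).

Definition P12 := setperm pb12_inj.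
Definition P13 := setperm pb13_inj.
Definition P14 := setperm pb14_inj.
Definition P23 := setperm pb23_inj.
Definition P24 := setperm pb24_inj.
Definition P34 := setperm pb34_inj.

Variables (G : {group gT}) (C1 C2 C3 C4 : {set gT}).

Definition class_vector :=
  [/\ C1 \in classes G, C2 \in classes G, C3 \in classes G & C4 \in classes G]
  /\ [/\ C1 != [set 1], C2 != [set 1], C3 != [set 1] & C4 != [set 1]].

Definition Einn : {set tup4} :=
  [set t : tup4 | let: (a, b, c, d) := t in
     [&& a \in C1, b \in C2, c \in C3, d \in C4,
         <<[set a; b; c; d]>> == G :> {set gT} & a * b * c * d == 1]].

Definition tclass (t : tup4) : {set tup4} := [set conjt t g | g in G].

Definition Sigma_in : {set {set tup4}} := [set tclass t | t in Einn].

Definition rho4 (p : {perm {set tup4}}) : {perm {set tup4}} := restr_perm Sigma_in p.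

Definition rho4_B4 : {set {perm {set tup4}}} :=
  restr_perm Sigma_in @* <<[set P12; P13; P14; P23; P24; P34]>>.

End Braid4.

From HB Require Import structures.
From mathcomp Require Import all_boot all_fingroup all_algebra cyclic.
Set Implicit Arguments. Unset Strict Implicit. Unset Printing Implicit Defensive.
Local Open Scope group_scope.

(* On a tuple (a, b, c, d) with abcd = 1, the pure braids satisfy, up to
   simultaneous conjugation by an element of G, the relations
   b12 b13 b14 = 1, b34 = b12, b23 = b14 and b24 = b12 b13 b12^-1.
   So on Sigma^i the images x, y, z of b12, b13, b14 satisfy xyz = 1 and
   generate rho4(B4). Three involutions with product 1 commute, hence
   rho4(B4) = <x> \x <y> is a Klein four group. *)

Lemma invg_order2 (gT : finGroupType) (z : gT) : #[z] = 2 -> z^-1 = z.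
Proof. by move=> oz; rewrite -[z^-1]mulg1 -(expg_order z) oz expgS expg1 mulKg. Qed.

Section KleinFour.
Variables (gT : finGroupType) (x y : gT).
Hypotheses (ox : #[x] = 2) (oy : #[y] = 2) (oxy : #[x * y] = 2).

Lemma order2_commute : commute x y.
Proof.
by rewrite /commute -{2}(invg_order2 ox) -{2}(invg_order2 oy) -invMg invg_order2.
Qed.

Lemma order2_cycle_TI : <[x]> :&: <[y]> = 1.
Proof.
apply: prime_TIg; first by rewrite -orderE ox.
rewrite cycle_subG /= cycle2g // !inE; apply/norP; split; apply/eqP => def_x.
  by move: ox; rewrite def_x order1.
by move: oxy; rewrite def_x -{1}(invg_order2 oy) mulVg order1.
Qed.

Lemma order2_dprod : <[x]> \x <[y]> = <<[set x; y]>>.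
Proof.
rewrite dprodEY ?cents_cycle ?order2_cycle_TI //; last exact/esym/order2_commute.
by rewrite /cycle joing_idl joing_idr.
Qed.

End KleinFour.

Lemma order2_isog_Z2 (gT : finGroupType) (z : gT) : #[z] = 2 -> <[z]> \isog [set: 'Z_2].
Proof.
have card_Z2 : #|[set: 'Z_2]| = 2 by rewrite cardsT card_ord.
move=> oz; rewrite isog_cyclic_card ?cycle_cyclic // prime_cyclic card_Z2 //=.
by apply/eqP; rewrite -oz.
Qed.

Lemma order2_isog_Z2xZ2 (gT : finGroupType) (x y : gT) :
  #[x] = 2 -> #[y] = 2 -> #[x * y] = 2 -> <<[set x; y]>> \isog [set: 'Z_2 * 'Z_2].
Proof.
move=> ox oy oxy.
have <- : setX [set: 'Z_2] [set: 'Z_2] = [set: 'Z_2 * 'Z_2].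
  by apply/setP => -[a b]; rewrite in_setX !in_setT.
apply: isog_dprod (order2_dprod ox oy oxy) (setX_dprod [set: _]%G [set: _]%G) _ _.
  by rewrite (isog_transl _ (order2_isog_Z2 ox)) isog_setX1.
by rewrite (isog_transl _ (order2_isog_Z2 oy)) isog_set1X.
Qed.

Section RestrPerm.
Variables (T : finType) (S : {set T}).
Implicit Types p q : {perm T}.

Lemma astabs_restr_perm_neq1 p : restr_perm S p != 1 -> p \in 'N(S | 'P).
Proof. by apply: contraR => /triv_restr_perm ->. Qed.

Lemma astabs_eq_in p q : p \in 'N(S | 'P) -> {in S, p =1 q} -> q \in 'N(S | 'P).
Proof.
move=> Np pq; rewrite !inE; apply/subsetP => X SX; rewrite inE.
have := astabs_act X Np; rewrite SX => SpX.
by rewrite [_ \in _]/(q X \in S) -pq.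
Qed.

Lemma restr_perm_eq_in p q :
  p \in 'N(S | 'P) -> {in S, p =1 q} -> restr_perm S q = restr_perm S p.
Proof.
move=> Np pq; have Nq := astabs_eq_in Np pq.
apply/permP => X; have [SX | S'X] := boolP (X \in S).
  by rewrite !restr_permE // pq.
by rewrite !(out_perm (restr_perm_on _ _)).
Qed.

End RestrPerm.

Section Equivariance.
Variable gT : finGroupType.
Implicit Types (f h : tup4 gT -> tup4 gT) (t : tup4 gT).

Definition conj_equivariant f := forall t (g : gT), f (conjt t g) = conjt (f t) g.

Lemma equivariant_comp f h :
  conj_equivariant f -> conj_equivariant h -> conj_equivariant (f \o h).
Proof. by move=> ef eh t g /=; rewrite eh ef. Qed.

Lemma equivariant_can f h :
  cancel f h -> cancel h f -> conj_equivariant f -> conj_equivariant h.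
Proof. by move=> fK hK ef t g; apply: (can_inj fK); rewrite hK ef hK. Qed.

Lemma hb2_equivariant : conj_equivariant (@hb2 gT).
Proof. by case=> [[[a b] c] d] g /=; rewrite !conjMg conjVg. Qed.
Lemma hb3_equivariant : conj_equivariant (@hb3 gT).
Proof. by case=> [[[a b] c] d] g /=; rewrite !conjMg conjVg. Qed.
Lemma hb4_equivariant : conj_equivariant (@hb4 gT).
Proof. by case=> [[[a b] c] d] g /=; rewrite !conjMg conjVg. Qed.

Let hb2i_equivariant := equivariant_can (@hb2K gT) (@hb2iK gT) hb2_equivariant.
Let hb3i_equivariant := equivariant_can (@hb3K gT) (@hb3iK gT) hb3_equivariant.

Ltac equivariant :=
  repeat apply: equivariant_comp; first [exact: hb2_equivariant
    | exact: hb3_equivariant | exact: hb4_equivariant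
    | exact: hb2i_equivariant | exact: hb3i_equivariant].

Lemma pb12_equivariant : conj_equivariant (@pb12 gT). Proof. equivariant. Qed.
Lemma pb13_equivariant : conj_equivariant (@pb13 gT). Proof. equivariant. Qed.
Lemma pb14_equivariant : conj_equivariant (@pb14 gT). Proof. equivariant. Qed.
Lemma pb23_equivariant : conj_equivariant (@pb23 gT). Proof. equivariant. Qed.
Lemma pb24_equivariant : conj_equivariant (@pb24 gT). Proof. equivariant. Qed.
Lemma pb34_equivariant : conj_equivariant (@pb34 gT). Proof. equivariant. Qed.

Lemma setperm_tclass f (finj : injective f) (G : {group gT}) t :
  conj_equivariant f -> setperm finj (tclass G t) = tclass G (f t).
Proof. by move=> ef; rewrite permE /tclass -imset_comp; apply: eq_imset => g /=. Qed.

Lemma tclass_conjt (G : {group gT}) t g : g \in G -> tclass G (conjt t g) = tclass G t.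
Proof.
have conjtM (h k : gT) : conjt (conjt t h) k = conjt t (h * k).
  by case: t => [[[a b] c] d] /=; rewrite !conjgM.
move=> Gg; apply/setP => u; apply/imsetP/imsetP => -[h Gh ->].
  by exists (g * h); rewrite ?groupM.
by exists (g^-1 * h); rewrite ?groupM ?groupV // conjtM mulKVg.
Qed.

End Equivariance.

#[local] Hint Resolve pb12_equivariant pb13_equivariant pb14_equivariant
  pb23_equivariant pb24_equivariant pb34_equivariant : core.

Section Relations.
Variable gT : finGroupType.
Implicit Types a b c : gT.

Definition tup4_prod1 a b c : tup4 gT := (a, b, c, (a * b * c)^-1).

Ltac group_simpl := repeat first [rewrite mulgK | rewrite mulgKV | rewrite mulgV
  | rewrite mulVg | rewrite mul1g | rewrite mulg1 | rewrite mulgA | rewrite invgK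
  | rewrite invMg | rewrite conjgE].

Lemma pb14_pb13_pb12 a b c :
  pb14 (pb13 (pb12 (tup4_prod1 a b c))) = conjt (tup4_prod1 a b c) a^-1.
Proof.
rewrite /pb12 /=; group_simpl; rewrite /pb13 /=; group_simpl.
by rewrite /pb14 /=; congr (_, _, _, _); group_simpl.
Qed.

Lemma pb12_conjt_pb34 a b c :
  pb12 (tup4_prod1 a b c) = conjt (pb34 (tup4_prod1 a b c)) (a * b)^-1.
Proof. by rewrite /pb12 /pb34 /=; congr (_, _, _, _); group_simpl. Qed.

Lemma pb14_conjt_pb23 a b c :
  pb14 (tup4_prod1 a b c) = conjt (pb23 (tup4_prod1 a b c)) (b * c).
Proof. by rewrite /pb14 /pb23 /=; congr (_, _, _, _); group_simpl. Qed.

Lemma pb12_pb24_conjt a b c :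
  pb12 (pb24 (tup4_prod1 a b c)) = conjt (pb13 (pb12 (tup4_prod1 a b c))) (a * c).
Proof. by rewrite /pb12 /pb13 /pb24 /=; congr (_, _, _, _); group_simpl. Qed.

End Relations.

Section PureBraidAction.
Variables (gT : finGroupType) (G : {group gT}) (C1 C2 C3 C4 : {set gT}).
Local Notation Sigma := (Sigma_in G C1 C2 C3 C4).
Local Notation rho := (rho4 G C1 C2 C3 C4).

Lemma Sigma_inP X : X \in Sigma ->
  exists a b c, [/\ a \in G, b \in G, c \in G & X = tclass G (tup4_prod1 a b c)].
Proof.
case/imsetP => -[[[a b] c] d]; rewrite inE.
move=> /and5P[_ _ _ _ /andP[/eqP genG /eqP abcd]] ->.
have inG u : u \in [set a; b; c; d] -> u \in G by rewrite -genG => /mem_gen.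
exists a, b, c; rewrite !inG ?inE ?eqxx ?orbT //; split=> //; congr (tclass _ (_, _)).
by apply/esym/eqP; rewrite eq_invg_mul abcd.
Qed.

Lemma P12_P13_P14_Sigma : {in Sigma, P12 gT * P13 gT * P14 gT =1 (1 : {perm _})}.
Proof.
move=> _ /Sigma_inP[a [b [c [Ga Gb Gc ->]]]].
by rewrite perm1 !permM !setperm_tclass // pb14_pb13_pb12 tclass_conjt ?groupV.
Qed.

Lemma P34_Sigma : {in Sigma, P12 gT =1 P34 gT}.
Proof.
move=> _ /Sigma_inP[a [b [c [Ga Gb Gc ->]]]].
by rewrite !setperm_tclass // pb12_conjt_pb34 tclass_conjt ?groupV ?groupM.
Qed.

Lemma P23_Sigma : {in Sigma, P14 gT =1 P23 gT}.
Proof.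
move=> _ /Sigma_inP[a [b [c [Ga Gb Gc ->]]]].
by rewrite !setperm_tclass // pb14_conjt_pb23 tclass_conjt ?groupM.
Qed.

Lemma P24_Sigma : {in Sigma, P12 gT * P13 gT * (P12 gT)^-1 =1 P24 gT}.
Proof.
move=> _ /Sigma_inP[a [b [c [Ga Gb Gc ->]]]]; rewrite !permM; apply: (canLR (permK _)).
by rewrite !setperm_tclass // pb12_pb24_conjt tclass_conjt ?groupM.
Qed.

Hypotheses (N12 : P12 gT \in 'N(Sigma | 'P)) (N13 : P13 gT \in 'N(Sigma | 'P))
  (N14 : P14 gT \in 'N(Sigma | 'P)).

Lemma rho4_P12_P13_P14 : rho (P12 gT) * rho (P13 gT) * rho (P14 gT) = 1.
Proof.
rewrite -!morphM ?groupM //= -(morph1 (restr_perm_morphism Sigma)) /=.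
by symmetry; apply: restr_perm_eq_in P12_P13_P14_Sigma; rewrite ?groupM.
Qed.

Lemma rho4_P14 : rho (P14 gT) = (rho (P12 gT) * rho (P13 gT))^-1.
Proof. by apply/eqP; rewrite eq_sym eq_invg_mul rho4_P12_P13_P14. Qed.

Lemma rho4_P34 : rho (P34 gT) = rho (P12 gT).
Proof. exact: restr_perm_eq_in P34_Sigma. Qed.

Lemma rho4_P23 : rho (P23 gT) = rho (P14 gT).
Proof. exact: restr_perm_eq_in P23_Sigma. Qed.

Lemma rho4_P24 : rho (P24 gT) = rho (P12 gT) * rho (P13 gT) * (rho (P12 gT))^-1.
Proof.
rewrite -morphV // -!morphM ?groupM ?groupV //=.
by apply: restr_perm_eq_in P24_Sigma; rewrite ?groupM ?groupV.
Qed.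

Lemma rho4_B4_gen : rho4_B4 G C1 C2 C3 C4 = <<[set rho (P12 gT); rho (P13 gT)]>>.
Proof.
have N34 := astabs_eq_in N12 P34_Sigma.
have N23 := astabs_eq_in N14 P23_Sigma.
have N24 := astabs_eq_in (groupM (groupM N12 N13) (groupVr N12)) P24_Sigma.
have sPN : [set P12 gT; P13 gT; P14 gT; P23 gT; P24 gT; P34 gT] \subset 'N(Sigma | 'P).
  by rewrite !subUset !sub1set N12 N13 N14 N23 N24 N34.
rewrite /rho4_B4 morphim_gen // morphimEsub // !imsetU !imset_set1 /=.
rewrite -[restr_perm Sigma]/(rho4 G C1 C2 C3 C4) rho4_P34 rho4_P23 rho4_P24 rho4_P14.
set x := rho (P12 gT); set y := rho (P13 gT).
have Hx : x \in <<[set x; y]>> by rewrite mem_gen ?setU11.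
have Hy : y \in <<[set x; y]>> by rewrite mem_gen ?setU1r ?set11.
apply/eqP; rewrite eqEsubset gen_subG !subUset !sub1set Hx Hy !groupV ?groupM ?groupV //=.
by apply: genS; apply/subsetP => u; rewrite !inE => /orP[] ->; rewrite ?orbT.
Qed.

End PureBraidAction.

Theorem corollary3 (gT : finGroupType) (G : {group gT})
    (C1 C2 C3 C4 : {set gT}) :
  class_vector G C1 C2 C3 C4 ->
  #[rho4 G C1 C2 C3 C4 (P12 gT)] = 2%N ->
  #[rho4 G C1 C2 C3 C4 (P13 gT)] = 2%N ->
  #[rho4 G C1 C2 C3 C4 (P14 gT)] = 2%N ->
  rho4_B4 G C1 C2 C3 C4 \isog [set: 'Z_2 * 'Z_2].
Proof.
move=> _ o12 o13 o14.
(* [restr_perm] is trivial off the stabiliser of Sigma^i. *)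
have astabs_order2 p : #[rho4 G C1 C2 C3 C4 p] = 2 -> p \in 'N(Sigma_in G C1 C2 C3 C4 | 'P).
  by move=> op; apply: astabs_restr_perm_neq1; rewrite -order_eq1 op.
rewrite rho4_B4_gen ?astabs_order2 //; apply: order2_isog_Z2xZ2 => //.
by rewrite -orderV -rho4_P14 ?astabs_order2.
Qed.
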